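(* Let $(\Gamma,\rho)$ be a voltage graph with $\Gamma=(V,E)$ a rooted simple digraph on $V=\{v_1,\dots,v_N\}$ and voltage group $G$ a point group in dimension $k$, such that $G_i=G_i^*$ for some (and hence any) root $v_i$ of $\Gamma$. Let $V=\bigsqcup_{l=1}^m V_l$ be the $(\Gamma,\rho)$-adapted partition. Then: (1) Fix a vertex $v_i$. Two vertices $v_j,v_k$ lie in the same subset $V_l$ if and only if $\mathrm{Net}(v_i,v_j)=\mathrm{Net}(v_i,v_k)$. In particular $m=|\mathrm{Net}(v_i,V)|/|G_i|\le |G|/|G_i|$, with equality if and only if $(\Gamma,\rho)$ is nondegenerate. (2) Let $p(t)=(x_1(t),\dots,x_N(t))$ be a trajectory of the $G$-clustering dynamics $\dot x_i=\sum_{v_j\in\mathcal{N}^-(v_i)}a_{ij}(\rho(e_{ij})x_j-x_i)$ (with constants $a_{ij}>0$, $x_i\in\mathbb{R}^k$) converging to $p^*=(x_1^*,\dots,x_N^* )$. Then $x_i^*=x_j^*$ whenever $v_i$ and $v_j$ lie in the same subset $V_l$.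
   Context: Digraphs are simple; $e_{ij}$ denotes the edge $v_i\to v_j$; $\mathcal{N}^-(v_i)=\{v_j:e_{ij}\in E\}$. A voltage graph is $(\Gamma,\rho)$ with $\rho:E\to G$, $G$ finite with identity $\mathbf{1}$; a point group in dimension $k$ is a finite subgroup of $\mathrm{O}(k)$. A semi-walk is $w=v_{i_1}a_1\dots a_{n-1}v_{i_n}$ with each $a_j\in\{e_{i_ji_{j+1}},e_{i_{j+1}i_j}\}$; it is closed if $v_{i_1}=v_{i_n}$, a walk if every $a_j=e_{i_ji_{j+1}}$; a path is a walk with distinct vertices. Net voltage: $f(w)=\bar\rho(a_1)\cdots\bar\rho(a_{n-1})$ with $\bar\rho(a_j)=\rho(a_j)$ for forward edges and $\rho(a_j)^{-1}$ for backward ones ($f=\mathbf 1$ on a single vertex). $G_i$ (local group) is the set of $f(w)$ over closed semi-walks at $v_i$; $G_i^*$ (directed local group) is the set of $f(w)$ over closed walks at $v_i$. $\mathrm{Net}(v_i,v_j)=\{f(w): w$ a semi-walk from $v_i$ to $v_j\}$, $\mathrm{Net}(v_i,V)=\bigcup_{v_j\in V}\mathrm{Net}(v_i,v_j)$. $\Gamma$ is weakly connected if any two vertices are joined by a semi-walk; $(\Gamma,\rho)$ (weakly connected) is nondegenerate if $\mathrm{Net}(v_i,V)=G$ for some vertex $v_i$. $\Gamma$ is rooted if some vertex (a root) is reachable by a path from every vertex. The $(\Gamma,\rho)$-adapted partition of $V$ is the partition into equivalence classes where $v_i\sim v_j$ iff there is a semi-walk $w$ from $v_i$ to $v_j$ with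 $f(w)=\mathbf 1$. *)

From HB Require Import structures.
From mathcomp Require Import all_boot all_order all_algebra all_fingroup.
From mathcomp Require Import mxrepresentation.
From mathcomp Require Import boolp classical_sets reals topology normedtype derive.
Set Implicit Arguments. Unset Strict Implicit. Unset Printing Implicit Defensive.
Import Order.TTheory GRing.Theory Num.Theory.

(* A simple digraph on V = 'I_N is an irreflexive relation E : rel 'I_N;
   E i j means the edge e_ij : v_i -> v_j is present.
   A voltage assignment is rho : 'I_N -> 'I_N -> gT, only its values on
   edges (E i j) matter.

   A semi-walk starting at v is encoded as a list of steps (b, j):
   b = true : forward edge e_{c j} from the current vertex c to j,
   b = false: backward edge e_{j c} traversed from c to j. *)

Section Walks.
Variables (N : nat) (gT : finGroupType).
Variable (E : rel 'I_N) (rho : 'I_N -> 'I_N -> gT).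

Definition simple_digraph := irreflexive E.

Fixpoint semiwalk (c : 'I_N) (s : seq (bool * 'I_N)) : bool :=
  match s with
  | [::] => true
  | (b, j) :: s' => (if b then E c j else E j c) && semiwalk j s'
  end.

Definition is_walk (c : 'I_N) (s : seq (bool * 'I_N)) : bool :=
  semiwalk c s && all (fun st => st.1) s.

Definition sw_end (c : 'I_N) (s : seq (bool * 'I_N)) : 'I_N := last c (unzip2 s).

Definition sw_verts (c : 'I_N) (s : seq (bool * 'I_N)) : seq 'I_N := c :: unzip2 s.

Definition step_voltage (c : 'I_N) (st : bool * 'I_N) : gT :=
  if st.1 then rho c st.2 else (rho st.2 c)^-1%g.

Fixpoint net_voltage (c : 'I_N) (s : seq (bool * 'I_N)) : gT :=
  match s with
  | [::] => 1%g
  | st :: s' => (step_voltage c st * net_voltage st.2 s')%g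
  end.

Definition Net (i j : 'I_N) : {set gT} :=
  [set g | `[< exists s, [/\ semiwalk i s, sw_end i s = j & net_voltage i s = g] >]].

Definition NetV (i : 'I_N) : {set gT} := \bigcup_(j : 'I_N) Net i j.

Definition local_group (i : 'I_N) : {set gT} := Net i i.

Definition dir_local_group (i : 'I_N) : {set gT} :=
  [set g | `[< exists s, [/\ is_walk i s, sw_end i s = i & net_voltage i s = g] >]].

Definition weakly_connected : Prop :=
  forall i j : 'I_N, exists s, semiwalk i s /\ sw_end i s = j.

Definition is_path (c : 'I_N) (s : seq (bool * 'I_N)) : bool :=
  is_walk c s && uniq (sw_verts c s).

Definition is_root (r : 'I_N) : Prop :=
  forall i : 'I_N, exists s, is_path i s /\ sw_end i s = r.

Definition rooted : Prop := exists r, is_root r.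

Definition vg_nondegenerate (G : {set gT}) : Prop :=
  weakly_connected /\ exists i : 'I_N, NetV i = G.

Definition adapted_rel : rel 'I_N := fun i j =>
  `[< exists s, [/\ semiwalk i s, sw_end i s = j & net_voltage i s = 1%g] >].

Definition adapted_partition : {set {set 'I_N}} :=
  equivalence_partition adapted_rel [set: 'I_N].

End Walks.

(* the G-clustering dynamics, with the voltage group acting through
   the matrices rG g (rG a faithful orthogonal representation of G) *)
Definition clustering_rhs (R : realType) (N k : nat) (gT : finGroupType)
  (G : {group gT}) (rG : mx_representation R G k)
  (E : rel 'I_N) (rho : 'I_N -> 'I_N -> gT) (a : 'I_N -> 'I_N -> R)
  (x : 'I_N -> 'cV[R]_k) (i : 'I_N) : 'cV[R]_k :=
  (\sum_(j | E i j) a i j *: (rG (rho i j) *m x j - x i))%R.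

From HB Require Import structures.
From mathcomp Require Import all_boot all_order all_algebra all_fingroup.
From mathcomp Require Import mxrepresentation.
From mathcomp Require Import boolp classical_sets reals topology normedtype derive.
From mathcomp Require Import ring lra.
Import Order.TTheory GRing.Theory Num.Theory.
Import numFieldNormedType.Exports.
Set Implicit Arguments. Unset Strict Implicit. Unset Printing Implicit Defensive.

(* Net(v_i, v_j) is a right coset of the local group G_i, and two vertices are
   equivalent exactly when they give the same coset; counting these cosets
   inside Net(v_i, V) <= G gives part (1).
   For part (2), the limit y of the trajectory is an equilibrium, and at an
   equilibrium each twisted coordinate (rho(g) y_j)_p, for g in Net(v_r, v_j),
   is a weighted average of those of the out-neighbours of v_j.  A maximum
   therefore propagates forward along walks: walking from a maximiser to the
   root v_r, then around a closed directed walk at v_r carrying the inverse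
   voltage (one exists because G_r = G_r^* ), shows that the maximum is
   attained at (v_r, 1).  Applied to y and -y this gives rho(g) y_j = y_r for
   every g in Net(v_r, v_j), so y_j depends only on Net(v_r, v_j). *)

Section SemiWalks.
Variables (N : nat) (E : rel 'I_N).
Implicit Types (c i j : 'I_N) (s : seq (bool * 'I_N)).

Lemma sw_end_cons c b j s : sw_end c ((b, j) :: s) = sw_end j s.
Proof. by []. Qed.

Lemma sw_end_cat c s1 s2 : sw_end c (s1 ++ s2) = sw_end (sw_end c s1) s2.
Proof. by rewrite /sw_end /unzip2 map_cat last_cat. Qed.

Lemma semiwalk_cat c s1 s2 :
  semiwalk E c (s1 ++ s2) = semiwalk E c s1 && semiwalk E (sw_end c s1) s2.
Proof. by elim: s1 c => [|[b j] s IH] c //=; rewrite IH andbA. Qed.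

Fixpoint rev_semiwalk c s : seq (bool * 'I_N) :=
  if s is (b, j) :: s' then rev_semiwalk j s' ++ [:: (~~ b, c)] else [::].

Lemma sw_end_rev c s : sw_end (sw_end c s) (rev_semiwalk c s) = c.
Proof. by elim: s c => [|[b j] s IH] c //=; rewrite sw_end_cat IH. Qed.

Lemma semiwalk_rev c s :
  semiwalk E c s -> semiwalk E (sw_end c s) (rev_semiwalk c s).
Proof.
elim: s c => [|[b j] s IH] c //= /andP[e /IH w_rev].
by rewrite sw_end_cons semiwalk_cat w_rev sw_end_rev /= andbT; case: b e.
Qed.

Lemma rooted_weakly_connected : rooted E -> weakly_connected E.
Proof.
case=> r root_r i j.
have [s1 [/andP[/andP[w1 _] _] e1]] := root_r i.
have [s2 [/andP[/andP[w2 _] _] e2]] := root_r j.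
exists (s1 ++ rev_semiwalk j s2).
by rewrite semiwalk_cat sw_end_cat e1 -e2 w1 semiwalk_rev // sw_end_rev.
Qed.

End SemiWalks.

Section NetVoltages.
Variables (N : nat) (gT : finGroupType) (E : rel 'I_N) (rho : 'I_N -> 'I_N -> gT).
Local Open Scope group_scope.
Implicit Types (c i j l : 'I_N) (s : seq (bool * 'I_N)) (g h : gT).

Lemma net_voltage_cat c s1 s2 : net_voltage rho c (s1 ++ s2) =
  net_voltage rho c s1 * net_voltage rho (sw_end c s1) s2.
Proof.
by elim: s1 c => [|[b j] s IH] c /=; rewrite ?mul1g // IH mulgA.
Qed.

Lemma net_voltage_rev c s :
  net_voltage rho (sw_end c s) (rev_semiwalk c s) = (net_voltage rho c s)^-1.
Proof.
elim: s c => [|[b j] s IH] c /=; first by rewrite invg1.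
rewrite sw_end_cons net_voltage_cat IH sw_end_rev invMg /= mulg1 /step_voltage /=.
by case: b; rewrite ?invgK.
Qed.

Lemma NetP i j g : reflect
  (exists s, [/\ semiwalk E i s, sw_end i s = j & net_voltage rho i s = g])
  (g \in Net E rho i j).
Proof. by rewrite inE; apply: (iffP idP) => /asboolP. Qed.

Lemma adapted_relP i j : reflect
  (exists s, [/\ semiwalk E i s, sw_end i s = j & net_voltage rho i s = 1])
  (adapted_rel E rho i j).
Proof. by apply: (iffP idP) => /asboolP. Qed.

Lemma dir_local_groupP i g : reflect
  (exists s, [/\ is_walk E i s, sw_end i s = i & net_voltage rho i s = g])
  (g \in dir_local_group E rho i).
Proof. by rewrite inE; apply: (iffP idP) => /asboolP. Qed.

Lemma semiwalk_Net c s : semiwalk E c s ->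
  net_voltage rho c s \in Net E rho c (sw_end c s).
Proof. by move=> w; apply/NetP; exists s. Qed.

Lemma Net1 i : 1 \in Net E rho i i.
Proof. exact: (semiwalk_Net (s := [::])). Qed.

Lemma Net_edge i j : E i j -> rho i j \in Net E rho i j.
Proof.
by move=> e; apply/NetP; exists [:: (true, j)]; rewrite /= e /step_voltage mulg1.
Qed.

Lemma Net_mul i j l g h :
  g \in Net E rho i j -> h \in Net E rho j l -> g * h \in Net E rho i l.
Proof.
move=> /NetP[s1 [w1 e1 <-]] /NetP[s2 [w2 e2 <-]]; apply/NetP; exists (s1 ++ s2).
by rewrite semiwalk_cat sw_end_cat net_voltage_cat e1 w1 w2.
Qed.

Lemma Net_inv i j g : g \in Net E rho i j -> g^-1 \in Net E rho j i.
Proof.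
move=> /NetP[s [w <- <-]]; rewrite -net_voltage_rev.
by have := semiwalk_Net (semiwalk_rev w); rewrite sw_end_rev.
Qed.

Lemma local_group_set i : group_set (local_group E rho i).
Proof. by apply/group_setP; split=> [|g h]; [apply: Net1 | apply: Net_mul]. Qed.

Canonical local_group_group i := Group (local_group_set i).

Lemma Net_rcoset i j g :
  g \in Net E rho i j -> Net E rho i j = local_group E rho i :* g.
Proof.
move=> gij; apply/setP => h; rewrite mem_rcoset.
apply/idP/idP => [hij | /Net_mul/(_ gij)]; first exact: Net_mul (Net_inv gij).
by rewrite mulgKV.
Qed.

Lemma Net_lcoset i j l g :
  g \in Net E rho i j -> Net E rho i l = g *: Net E rho j l.
Proof.
move=> gij; apply/setP => h; rewrite mem_lcoset.
apply/idP/idP => [hil | /(Net_mul gij)]; first exact: Net_mul (Net_inv gij) hil.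
by rewrite mulKVg.
Qed.

Lemma Net_subset (G : {group gT}) i j :
  (forall i j, E i j -> rho i j \in G) -> Net E rho i j \subset G.
Proof.
move=> rhoG; apply/fintype.subsetP => _ /NetP[s [w _ <-]].
elim: s i w => [|[b j'] s IH] i /=; first by rewrite group1.
case/andP=> e w; rewrite groupM ?IH // /step_voltage /=.
by case: b e => /= /rhoG; rewrite ?groupV.
Qed.

Lemma Net_nonempty i j : weakly_connected E -> exists g, g \in Net E rho i j.
Proof.
move=> wc; have [s [w <-]] := wc i j.
by exists (net_voltage rho i s); apply: semiwalk_Net.
Qed.

Lemma adapted_relE i j l : weakly_connected E ->
  adapted_rel E rho j l <-> Net E rho i j = Net E rho i l.
Proof.
move=> wc; have [g gij] := Net_nonempty i j wc.
split=> [/adapted_relP[s [w <- f1]] | eqN].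
  have gil : g \in Net E rho i (sw_end j s).
    by rewrite -[g]mulg1 -f1; apply: Net_mul gij (semiwalk_Net w).
  by rewrite (Net_rcoset gij) (Net_rcoset gil).
have /NetP[s [w <- f1]] : g^-1 * g \in Net E rho j l.
  by apply: Net_mul (Net_inv gij) _; rewrite -eqN.
by apply/adapted_relP; exists s; rewrite f1 mulVg.
Qed.

End NetVoltages.

Section PreimPartition.
Variables (T rT : finType) (f : T -> rT).

Lemma preim_partition_same_block (D : {set T}) x y : x \in D -> y \in D ->
  (exists2 B, B \in preim_partition f D & (x \in B) && (y \in B)) <-> f x = f y.
Proof.
move=> Dx Dy; split=> [[_ /imsetP[z _ ->]] | fxy].
  by rewrite !inE => /andP[/andP[_ /eqP <-] /andP[_ /eqP <-]].
exists [set u in D | f x == f u]; first exact: imset_f.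
by rewrite !inE Dx Dy fxy eqxx.
Qed.

Lemma card_preim_partition (D : {set T}) : #|preim_partition f D| = #|f @: D|.
Proof.
rewrite /preim_partition /equivalence_partition.
rewrite (imset_comp (fun v => [set u in D | v == f u])).
apply: card_in_imset => _ _ /imsetP[x Dx ->] /imsetP[y Dy ->] /setP/(_ y).
by rewrite !inE Dy eqxx => /eqP.
Qed.

End PreimPartition.

Section AdaptedPartition.
Variables (N : nat) (gT : finGroupType) (E : rel 'I_N) (rho : 'I_N -> 'I_N -> gT).
Hypothesis wc : weakly_connected E.
Variable i : 'I_N.
Local Notation P := (adapted_partition E rho).
Local Open Scope group_scope.

Lemma adapted_partitionE : P = preim_partition (Net E rho i) [set: 'I_N].
Proof.
apply: eq_imset => j; apply/setP => l; rewrite !inE.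
by apply/idP/eqP => /(adapted_relE rho i j l wc).
Qed.

Lemma adapted_partition_same_block j l :
  (exists2 B, B \in P & (j \in B) && (l \in B)) <-> Net E rho i j = Net E rho i l.
Proof. by rewrite adapted_partitionE; apply: preim_partition_same_block. Qed.

Lemma Net_partition_NetV :
  finset.partition (Net E rho i @: [set: 'I_N]) (NetV E rho i).
Proof.
apply/and3P; split.
- by rewrite cover_imset; apply/eqP; apply: eq_bigl => j; rewrite inE.
- apply/finset.trivIsetP => _ _ /imsetP[j _ ->] /imsetP[l _ ->]; apply: contraR.
  case/pred0Pn => g /andP[gij gil] /=.
  by rewrite (Net_rcoset gij) (Net_rcoset gil).
- apply/imsetP => -[j _ Net0]; have [g] := Net_nonempty rho i j wc.
  by rewrite -Net0 inE.
Qed.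

Lemma card_NetV : #|NetV E rho i| = (#|P| * #|local_group E rho i|)%N.
Proof.
rewrite adapted_partitionE card_preim_partition.
apply: card_uniform_partition Net_partition_NetV => _ /imsetP[j _ ->].
by have [g /Net_rcoset->] := Net_nonempty rho i j wc; rewrite card_rcoset.
Qed.

Lemma card_adapted_partition : #|P| = #|NetV E rho i| %/ #|local_group E rho i|.
Proof. by rewrite card_NetV mulnK // cardG_gt0. Qed.

Lemma NetV_lcoset j g : g \in Net E rho i j -> NetV E rho i = g *: NetV E rho j.
Proof.
move=> gij; apply/setP => h; rewrite mem_lcoset.
apply/bigcupP/bigcupP => -[l _ hl]; exists l => //.
  by rewrite (Net_lcoset l gij) mem_lcoset in hl.
by rewrite (Net_lcoset l gij) mem_lcoset.
Qed.

Variable G : {group gT}.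
Hypothesis rhoG : forall i j, E i j -> rho i j \in G.

Lemma NetV_subset j : NetV E rho j \subset G.
Proof. by apply/bigcupsP => l _; apply: Net_subset. Qed.

Lemma nondegenerateE : vg_nondegenerate E rho G <-> NetV E rho i = G.
Proof.
split=> [[_ [j NVj]] | NVi]; last by split=> //; exists i.
have [g gij] := Net_nonempty rho i j wc.
have gG : g \in G by apply: (fintype.subsetP (Net_subset i j rhoG)).
by rewrite (NetV_lcoset gij) NVj lcoset_id.
Qed.

Lemma card_adapted_partition_le : #|P| <= #|G| %/ #|local_group E rho i|.
Proof.
by rewrite card_adapted_partition leq_div2r // subset_leq_card ?NetV_subset.
Qed.

Lemma card_adapted_partition_eq :
  #|P| = #|G| %/ #|local_group E rho i| <-> vg_nondegenerate E rho G.
Proof.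
rewrite nondegenerateE; split=> [cardP | <-]; last exact: card_adapted_partition.
have /cardSg/divnK dvd_G : local_group E rho i \subset G by apply: Net_subset.
by apply/eqP; rewrite eqEcard NetV_subset card_NetV cardP dvd_G /=.
Qed.

End AdaptedPartition.

Section Limits.
Local Open Scope classical_set_scope.
Local Open Scope ring_scope.
Variable R : realType.

Lemma cvg_mx_entry (T : Type) (F : set_system T) (FF : Filter F) (m n : nat)
    (f : T -> 'M[R]_(m, n)) (A : 'M[R]_(m, n)) p q :
  f x @[x --> F] --> A -> f x p q @[x --> F] --> A p q.
Proof.
move=> /cvgrPdist_le fA; apply/cvgrPdist_le => e e_gt0.
apply: filterS (fA e e_gt0) => x; apply: le_trans.
rewrite [leRHS]mx_normrE; apply: le_trans (le_bigmax _ _ (p, q)).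
by rewrite !mxE.
Qed.

Lemma cvg_derive_pinfty_eq0 (y dy : R -> R) (L c : R) :
  (forall t : R, 0 < t -> is_derive t 1 y (dy t)) ->
  y t @[t --> +oo%R] --> L -> dy t @[t --> +oo%R] --> c -> c = 0.
Proof.
move=> y_der y_cvg dy_cvg; apply/eqP/negPn/negP => c_neq0.
have c_gt0 : 0 < `|c| by rewrite normr_gt0.
have [M1 [_ dy_near]] :=
  (cvgrPdist_lt _ _).1 dy_cvg _ (divr_gt0 c_gt0 (ltr0n _ 2)).
have [M2 [_ y_near]] :=
  (cvgrPdist_lt _ _).1 y_cvg _ (divr_gt0 c_gt0 (ltr0n _ 4)).
pose t := Num.max 0 (Num.max M1 M2) + 1.
have [t_gt0 t_gtM1 t_gtM2] : [/\ 0 < t, M1 < t & M2 < t].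
  by rewrite /t !ltr_pwDr ?le_max ?lexx ?orbT.
(* mean value theorem on [t, t + 1]: y (t + 1) - y t, which is close to 0,
   is a value of dy, which is close to c *)
have [xi] :
    exists2 xi, xi \in `]t, t + 1[ & y (t + 1) - y t = dy xi * (t + 1 - t).
  apply: MVT; first by rewrite ltrDl.
    by move=> x; rewrite in_itv /= => /andP[/(lt_trans t_gt0) /y_der].
  apply: continuous_in_subspaceT => x; rewrite inE /= in_itv /= => /andP[tx _].
  have [x_dvb _] := y_der x (lt_le_trans t_gt0 tx).
  exact/differentiable_continuous/derivable1_diffP.
rewrite in_itv /= [t + 1 - t]addrC addKr mulr1 => /andP[t_lt_xi _] mvt.
have t_lt_t1 : t < t + 1 by rewrite ltrDl.
have tri : `|c| <= `|c - dy xi| + `|L - y (t + 1)| + `|L - y t|.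
  rewrite {1}(_ : c = c - dy xi - (L - y (t + 1)) + (L - y t)).
    by rewrite (le_trans (ler_normD _ _)) // lerD2r ler_normB.
  by rewrite -mvt; ring.
have := dy_near xi (lt_trans t_gtM1 t_lt_xi).
have := y_near t t_gtM2; have := y_near (t + 1) (lt_trans t_gtM2 t_lt_t1).
lra.
Qed.

End Limits.

Section ClusteringLimit.
Local Open Scope classical_set_scope.
Local Open Scope ring_scope.
Variables (R : realType) (N k : nat) (gT : finGroupType) (G : {group gT}).
Variables (rG : mx_representation R G k) (E : rel 'I_N).
Variables (rho : 'I_N -> 'I_N -> gT) (a : 'I_N -> 'I_N -> R).
Variables (x : 'I_N -> R -> 'cV[R]_k) (xs : 'I_N -> 'cV[R]_k).
Hypothesis x_cvg : forall i, x i t @[t --> +oo%R] --> xs i.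

Lemma cvg_clustering_rhs_entry i p q :
  clustering_rhs rG E rho a (fun j => x j t) i p q @[t --> +oo%R] -->
  clustering_rhs rG E rho a xs i p q.
Proof.
rewrite /clustering_rhs summxE; under eq_cvg do rewrite summxE.
apply: cvg_big => [|j _]; first exact: add_continuous.
rewrite !mxE; under eq_cvg do rewrite !mxE.
apply: cvgMl_tmp; apply: cvgB; last exact: cvg_mx_entry.
apply: cvg_big => [|l _]; first exact: add_continuous.
by apply: cvgMl_tmp; apply: cvg_mx_entry.
Qed.

Lemma clustering_limit_equilibrium :
  (forall i (t : R), 0 < t ->
     is_derive t 1 (x i) (clustering_rhs rG E rho a (fun j => x j t) i)) ->
  forall i, clustering_rhs rG E rho a xs i = 0.
Proof.
move=> x_der i; apply/matrixP => p q; rewrite [RHS]mxE.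
apply: (@cvg_derive_pinfty_eq0 R (fun t => x i t p q)
  (fun t => clustering_rhs rG E rho a (fun j => x j t) i p q) (xs i p q)).
- move=> t t_gt0; have [x_dvb x_der_eq] := x_der i t t_gt0.
  apply: DeriveDef; first exact: (derivable_mxP _ _ _).1 x_dvb p q.
  by have := derive_mx x_dvb; rewrite x_der_eq => /matrixP/(_ p q); rewrite mxE.
- exact: cvg_mx_entry.
- exact: cvg_clustering_rhs_entry.
Qed.

End ClusteringLimit.

Section EquilibriumSymmetry.
Local Open Scope ring_scope.
Variables (R : realType) (N k : nat) (gT : finGroupType) (G : {group gT}).
Variables (rG : mx_representation R G k) (E : rel 'I_N).
Variables (rho : 'I_N -> 'I_N -> gT) (a : 'I_N -> 'I_N -> R).
Hypothesis rhoG : forall i j, E i j -> rho i j \in G.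
Hypothesis a_gt0 : forall i j, E i j -> 0 < a i j.

Lemma clustering_rhsN (y : 'I_N -> 'cV[R]_k) i :
  clustering_rhs rG E rho a (fun j => - y j) i = - clustering_rhs rG E rho a y i.
Proof.
rewrite /clustering_rhs -sumrN; apply: eq_bigr => j _.
by rewrite mulmxN -scalerN opprB opprK addrC.
Qed.

Section Coordinate.
Variables (y : 'I_N -> 'cV[R]_k) (p : 'I_k).
Hypothesis y_eq : forall i, clustering_rhs rG E rho a y i = 0.
Local Notation coord i g := ((rG g *m y i) p 0).

Lemma equilibrium_mean i g : g \in G ->
  \sum_(j | E i j) a i j * (coord j (g * rho i j)%g - coord i g) = 0.
Proof.
move=> gG; have := congr1 (fun z => (rG g *m z) p 0) (y_eq i).
rewrite /= mulmx0 [RHS]mxE /clustering_rhs mulmx_sumr summxE.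
move=> sum0; apply: etrans sum0; apply: eq_bigr => j eij.
by rewrite -scalemxAr mulmxBr mulmxA -repr_mxM ?rhoG // !mxE.
Qed.

Lemma equilibrium_max_step i j g M : g \in G -> E i j -> coord i g = M ->
  (forall l, E i l -> coord l (g * rho i l)%g <= M) ->
  coord j (g * rho i j)%g = M.
Proof.
move=> gG eij <- le_M; apply/eqP; rewrite -subr_eq0.
have /eqP := equilibrium_mean i gG; rewrite -oppr_eq0 -sumrN psumr_eq0.
  move=> /allP/(_ j (mem_index_enum _)); rewrite eij oppr_eq0 mulf_eq0.
  by rewrite gt_eqF ?a_gt0.
move=> l eil; rewrite -mulrN opprB.
by apply: mulr_ge0; [exact/ltW/a_gt0 | rewrite subr_ge0 le_M].
Qed.

Lemma equilibrium_max_walk r M :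
  (forall i g, g \in Net E rho r i -> coord i g <= M) ->
  forall c s g, is_walk E c s -> g \in Net E rho r c -> coord c g = M ->
  coord (sw_end c s) (g * net_voltage rho c s)%g = M.
Proof.
move=> le_M c s; elim: s c => [|[b j] s IH] c g /=; first by rewrite mulg1.
rewrite /is_walk /= => /andP[/andP[e w] /andP[/= b_fwd fwd]] grc gc_M.
rewrite b_fwd in e; have gG := fintype.subsetP (Net_subset r c rhoG) _ grc.
rewrite /step_voltage b_fwd /= mulgA.
apply: (IH j); [by rewrite /is_walk w | exact: Net_mul grc (Net_edge rho e) |].
apply: equilibrium_max_step gG e gc_M _ => l el.
exact/le_M/(Net_mul grc (Net_edge rho el)).
Qed.

Lemma equilibrium_coord_le_root r i g :
  is_root E r -> local_group E rho r = dir_local_group E rho r ->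
  g \in Net E rho r i -> coord i g <= (y r) p 0.
Proof.
move=> root_r G_r_dir gri.
pose K : {pred 'I_N * gT} := [pred v | v.2 \in Net E rho r v.1].
have K_r1 : (r, 1%g) \in K by exact: Net1.
case: (arg_maxP (fun v : 'I_N * gT => coord v.1 v.2) K_r1).
move=> -[i0 g0] g0_in max_coord.
have {}g0_in : g0 \in Net E rho r i0 := g0_in.
have le_M j h : h \in Net E rho r j -> coord j h <= coord i0 g0.
  by move=> hj; apply: (max_coord (j, h)).
have [s [/andP[walk_s _] end_s]] := root_r i0.
set g1 := (g0 * net_voltage rho i0 s)%g.
have g1_loc : g1 \in local_group E rho r.
  by have := Net_mul g0_in (semiwalk_Net rho (andP walk_s).1); rewrite end_s.
have g1_max : coord r g1 = coord i0 g0.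
  by have := equilibrium_max_walk le_M walk_s g0_in erefl; rewrite end_s.
have /dir_local_groupP[w [walk_w end_w net_w]] :
    (g1^-1)%g \in dir_local_group E rho r by rewrite -G_r_dir groupV.
have := equilibrium_max_walk le_M walk_w g1_loc g1_max.
rewrite end_w net_w mulgV repr_mx1 mul1mx => ->.
exact: le_M.
Qed.
End Coordinate.

Variables (y : 'I_N -> 'cV[R]_k) (r : 'I_N).
Hypothesis y_eq : forall i, clustering_rhs rG E rho a y i = 0.
Hypotheses (root_r : is_root E r)
           (G_r_dir : local_group E rho r = dir_local_group E rho r).

Lemma equilibrium_Net_action i g : g \in Net E rho r i -> rG g *m y i = y r.
Proof.
move=> gri; apply/matrixP => p q; rewrite (ord1 q).
apply/le_anti; rewrite equilibrium_coord_le_root //=.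
have y_eqN j : clustering_rhs rG E rho a (fun j => - y j) j = 0.
  by rewrite clustering_rhsN y_eq oppr0.
have := equilibrium_coord_le_root p y_eqN root_r G_r_dir gri.
by rewrite mulmxN !mxE lerN2.
Qed.

Lemma equilibrium_eq_on_Net_classes i j :
  Net E rho r i = Net E rho r j -> y i = y j.
Proof.
have wc : weakly_connected E by apply: rooted_weakly_connected; exists r.
move=> Net_ij; have [g gri] := Net_nonempty rho r i wc.
have grj : g \in Net E rho r j by rewrite -Net_ij.
have gG : g \in G by apply: (fintype.subsetP (Net_subset r i rhoG)).
have y_eq_act l : g \in Net E rho r l -> y l = rG (g^-1)%g *m y r.
  move=> /equilibrium_Net_action <-.
  by rewrite mulmxA -repr_mxM ?groupV // mulVg repr_mx1 mul1mx.
by rewrite (y_eq_act i gri) (y_eq_act j grj).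
Qed.

End EquilibriumSymmetry.

Local Open Scope classical_set_scope.

Theorem corollary4
  (R : realType) (N k : nat) (gT : finGroupType) (G : {group gT})
  (rG : mx_representation R G k)
  (E : rel 'I_N) (rho : 'I_N -> 'I_N -> gT) :
  (* point group in dimension k: G faithfully represented by orthogonal matrices *)
  mx_faithful rG ->
  (forall g, g \in G -> (rG g *m (rG g)^T = 1%:M)%R) ->
  (* voltage graph on a simple digraph *)
  simple_digraph E ->
  (forall i j, E i j -> rho i j \in G) ->
  (* rooted, and G_i = G_i^* at some root v_i *)
  (exists r, is_root E r /\ local_group E rho r = dir_local_group E rho r) ->
  let P := adapted_partition E rho in
  (* part (1) *)
  (forall i : 'I_N,
     (forall j l : 'I_N,
        (exists2 B, B \in P & (j \in B) && (l \in B)) <-> Net E rho i j = Net E rho i l)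
     /\ #|P| = #|NetV E rho i| %/ #|local_group E rho i|
     /\ #|P| <= #|G| %/ #|local_group E rho i|
     /\ (#|P| = #|G| %/ #|local_group E rho i| <-> vg_nondegenerate E rho G))
  /\
  (* part (2) *)
  (forall (a : 'I_N -> 'I_N -> R) (x : 'I_N -> R -> 'cV[R]_k) (xs : 'I_N -> 'cV[R]_k),
     (forall i j, E i j -> (0 < a i j)%R) ->
     (forall i (t : R), (0 < t)%R ->
        is_derive t 1%R (x i) (clustering_rhs rG E rho a (fun j => x j t) i)) ->
     (forall i, x i t @[t --> +oo%R] --> xs i) ->
     forall i j, (exists2 B, B \in P & (i \in B) && (j \in B)) -> xs i = xs j).
Proof.
move=> _ _ _ rhoG [r [root_r G_r_dir]] P.
have wc : weakly_connected E by apply: rooted_weakly_connected; exists r.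
split=> [i | a x xs a_gt0 x_der x_cvg i j same_block].
  split; first exact: adapted_partition_same_block.
  split; first exact: card_adapted_partition.
  by split; [apply: card_adapted_partition_le | apply: card_adapted_partition_eq].
apply: (equilibrium_eq_on_Net_classes rhoG a_gt0 _ root_r G_r_dir).
  exact: clustering_limit_equilibrium.
exact/(adapted_partition_same_block rho wc r).
Qed.
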